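(* Let $n\ge2$, let $P$ be a partial $n$-Metric on a set $X$, and let $\{x_i\}_{i\in\mathbb{N}}$ be a Cauchy sequence in $X$ with special limit $a\in X$. Then for every integer $0\le q\le n-1$, all $b_1,\dots,b_q\in X$ and every $\epsilon>0$ there exists $N\in\mathbb{N}$ such that for all $i_1,\dots,i_{n-q}>N$, $$P(\langle a\rangle^{n-q},b_1,\dots,b_q)-\epsilon<P(x_{i_1},\dots,x_{i_{n-q}},b_1,\dots,b_q)<P(\langle a\rangle^{n-q},b_1,\dots,b_q)+\epsilon.$$
   Context: Notation: $\langle a\rangle^k$ denotes the $k$-tuple $(a,\dots,a)$ inserted into an argument list. A partial $n$-Metric on $X$ is a function $P:X^n\to\mathbb{R}$ such that for all $x_1,\dots,x_n,a\in X$: (1) $P(\langle x_1\rangle^n)\le P(\langle x_1\rangle^{n-1},x_2)$; (2) $P$ is invariant under permutations of its arguments; (3) $P(\langle x_1\rangle^{n-1},x_2)=P(\langle x_1\rangle^n)$ and $P(\langle x_2\rangle^{n-1},x_1)=P(\langle x_2\rangle^n)$ iff $x_1=x_2$; (4) $P(x_1,\dots,x_n)\le P(x_1,\dots,x_{n-1},a)+P(\langle a\rangle^{n-1},x_n)-P(\langle a\rangle^n)$. A point $a$ is a limit of $\{x_i\}$ iff for every $\epsilon>0$ there is $N$ with $P(\langle a\rangle^{n-1},x_i)-P(\langle a\rangle^n)<\epsilon$ for all $i>N$ (convergence in the topology generated by the balls $\{y\mid P(\langle x\rangle^{n-1},y)-P(\langle x\rangle^n)<\epsilon\}$). $\{x_i\}$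 is Cauchy with central distance $r\in\mathbb{R}$ if for every $\epsilon>0$ there is $N$ such that $|P(x_{i_1},\dots,x_{i_n})-r|<\epsilon$ for all $i_1,\dots,i_n>N$. A special limit of such a sequence is a limit $a$ with $P(\langle a\rangle^n)=r$. *)

From HB Require Import structures.
From mathcomp Require Import all_boot all_order all_algebra.
From mathcomp Require Import fingroup perm.
From mathcomp Require Import reals.
Set Implicit Arguments. Unset Strict Implicit. Unset Printing Implicit Defensive.
Import Order.TTheory GRing.Theory Num.Theory.
Local Open Scope ring_scope.

Definition cat_args (X : Type) (n k : nat) (f g : nat -> X) : 'I_n -> X :=
  fun i => if (val i < k)%N then f (val i) else g (val i - k)%N.

Definition cst (X : Type) (x : X) : nat -> X := fun _ => x.

Definition rep (X : Type) (n : nat) (x : X) : 'I_n -> X := fun _ => x.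

Arguments cat_args {X} n k f g.
Arguments rep {X} n x.
Arguments cst {X} x _.

Section PM.
Variables (R : realType) (X : Type) (n : nat).

Definition partial_nmetric (P : ('I_n -> X) -> R) : Prop :=
  [/\
      (forall x1 x2 : X, P (rep n x1) <= P (cat_args n n.-1 (cst x1) (cst x2))),
      (forall (s : {perm 'I_n}) (f : 'I_n -> X), P (fun i => f (s i)) = P f),
      (forall x1 x2 : X,
        (P (cat_args n n.-1 (cst x1) (cst x2)) = P (rep n x1) /\
         P (cat_args n n.-1 (cst x2) (cst x1)) = P (rep n x2)) <-> x1 = x2) &
      (forall (xs : nat -> X) (a : X),
        P (fun i => xs (val i)) <=
        P (cat_args n n.-1 xs (cst a))
        + P (cat_args n n.-1 (cst a) (cst (xs n.-1))) - P (rep n a))].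

Definition is_limit (P : ('I_n -> X) -> R) (x : nat -> X) (a : X) : Prop :=
  forall eps : R, 0 < eps -> exists N : nat, forall i : nat, (N < i)%N ->
    P (cat_args n n.-1 (cst a) (cst (x i))) - P (rep n a) < eps.

Definition cauchy_central (P : ('I_n -> X) -> R) (x : nat -> X) (r : R) : Prop :=
  forall eps : R, 0 < eps -> exists N : nat, forall I : 'I_n -> nat,
    (forall j, (N < I j)%N) -> `|P (fun j => x (I j)) - r| < eps.

Definition special_limit (P : ('I_n -> X) -> R) (x : nat -> X) (r : R) (a : X) : Prop :=
  is_limit P x a /\ P (rep n a) = r.

End PM.

(** The quantity [gap a y = P(<a>^(n-1), y) - P(<a>^n)] bounds how much [P] can grow
    when one argument [a] is replaced by [y]: move the argument to the last slot by a
    permutation and apply the triangle axiom (4) with the point [a].  Replacing the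
    [n - q] points [a] by [x_i1, ..., x_i(n-q)] one at a time therefore changes [P] by
    at most [n] times the largest gap in either direction.  The gaps [gap a x_i] are
    small because [a] is a limit; the reverse gaps [gap x_i a] are small because the
    same replacement argument bounds [P(<x_i>^(n-1), a)] by [P(<a>^n) = r] plus small
    terms, while [P(<x_i>^n)] is close to [r] by the Cauchy property. *)
From HB Require Import structures.
From mathcomp Require Import all_boot all_order all_algebra.
From mathcomp Require Import fingroup perm.
From mathcomp Require Import reals.
From mathcomp Require Import ring lra.
From Stdlib Require Import FunctionalExtensionality.
Import Order.TTheory GRing.Theory Num.Theory.
Set Implicit Arguments. Unset Strict Implicit.
Local Open Scope ring_scope.

Definition set_arg (X : Type) (n : nat) (f : 'I_n -> X) (k : 'I_n) (v : X) : 'I_n -> X :=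
  fun i => if i == k then v else f i.

Definition gap (R : realType) (X : Type) (n : nat) (P : ('I_n -> X) -> R) (z y : X) : R :=
  P (cat_args n n.-1 (cst z) (cst y)) - P (rep n z).

Lemma cat_args_cst_rep (X : Type) (n k : nat) (a : X) :
  cat_args n k (cst a) (cst a) = rep n a.
Proof. by apply: functional_extensionality => i; rewrite /cat_args; case: ifP. Qed.

Section Replacement.

Variables (R : realType) (X : Type) (n : nat) (P : ('I_n -> X) -> R).

Hypothesis P_perm : forall (s : {perm 'I_n}) (f : 'I_n -> X), P (fun i => f (s i)) = P f.

Hypothesis P_triangle : forall (xs : nat -> X) (a : X),
  P (fun i => xs (val i)) <=
  P (cat_args n n.-1 xs (cst a)) + P (cat_args n n.-1 (cst a) (cst (xs n.-1))) - P (rep n a).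

Lemma P_set_arg_le (f : 'I_n -> X) (k : 'I_n) (y z : X) :
  P (set_arg f k y) <= P (set_arg f k z) + gap P z y.
Proof.
have n_gt0 : (0 < n)%N by apply: leq_ltn_trans (ltn_ord k).
have last_lt : (n.-1 < n)%N by rewrite ltn_predL.
pose last : 'I_n := Ordinal last_lt.
pose s := tperm k last.
have s_last : s last = k by rewrite /s tpermR.
have s_neq : forall i, i != last -> s i != k.
  by move=> i; apply: contra => /eqP; rewrite -s_last => /perm_inj ->.
pose xs j := set_arg f k y (s (insubd last j)).
have xs_last : xs n.-1 = y.
  have last_val : insubd last n.-1 = last by apply: val_inj; rewrite val_insubd last_lt.
  by rewrite /xs last_val /set_arg s_last eqxx.
have xs_args : (fun i : 'I_n => xs (val i)) = (fun i => set_arg f k y (s i)).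
  by apply: functional_extensionality => i; rewrite /xs valKd.
have xs_cat : cat_args n n.-1 xs (cst z) = (fun i => set_arg f k z (s i)).
  apply: functional_extensionality => i; rewrite /cat_args /xs valKd /set_arg.
  case: ifP => i_lt.
    have i_neq : i != last by apply: contraTneq i_lt => ->; rewrite ltnn.
    by rewrite (negbTE (s_neq _ i_neq)).
  have -> : i = last.
    apply/val_inj/eqP.
    by rewrite /= eqn_leq -ltnS prednK // ltn_ord /= leqNgt i_lt.
  by rewrite s_last eqxx.
have := P_triangle xs z.
rewrite xs_args xs_cat xs_last !(P_perm s) /gap.
lra.
Qed.

Lemma P_cat_args_le (m : nat) (h h' b : nat -> X) (c : R) :
  (m <= n)%N -> (forall j, (j < m)%N -> gap P (h' j) (h j) <= c) ->
  P (cat_args n m h b) <= P (cat_args n m h' b) + m%:R * c.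
Proof.
move=> m_le gap_le.
pose mix t j := if (j < t)%N then h' j else h j.
suff mix_le t : (t <= m)%N ->
    P (cat_args n m h b) <= P (cat_args n m (mix t) b) + t%:R * c.
  have := mix_le m (leqnn m).
  suff -> : cat_args n m (mix m) b = cat_args n m h' b by [].
  by apply: functional_extensionality => i; rewrite /cat_args /mix; case: (val i < m)%N.
elim: t => [|t IH] t_lt; first by rewrite mul0r addr0.
have t_lt_n : (t < n)%N by apply: leq_trans t_lt m_le.
pose k : 'I_n := Ordinal t_lt_n.
pose f := cat_args n m (mix t.+1) b.
have mix_t : cat_args n m (mix t) b = set_arg f k (h t).
  apply: functional_extensionality => i; rewrite /set_arg /f /cat_args /mix.
  case: (eqVneq i k) => [->|i_neq] /=; first by rewrite t_lt ltnn.
  have i_neq_t : val i != t by apply: contra i_neq => /eqP i_t; apply/eqP/val_inj.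
  suff -> : (val i < t.+1)%N = (val i < t)%N by [].
  by rewrite ltnS leq_eqVlt (negbTE i_neq_t).
have mix_tS : f = set_arg f k (h' t).
  apply: functional_extensionality => i; rewrite /set_arg /f /cat_args /mix.
  by case: (eqVneq i k) => [->|] //=; rewrite t_lt ltnSn.
have := IH (ltnW t_lt); rewrite mix_t.
have := P_set_arg_le f k (h t) (h' t); rewrite -mix_tS.
have := gap_le t t_lt.
rewrite -/f -[t.+1]addn1 natrD mulrDl mul1r; lra.
Qed.

Lemma gap_swap_le (a y : X) :
  gap P y a <= n.-1%:R * gap P a y + P (rep n a) - P (rep n y).
Proof.
have := @P_cat_args_le n.-1 (cst y) (cst a) (cst a) (gap P a y) (leq_pred n)
  (fun _ _ => lexx _).
by rewrite cat_args_cst_rep /gap; lra.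
Qed.

End Replacement.

Lemma special_limit_gap_le (R : realType) (X : Type) (n : nat) (P : ('I_n -> X) -> R)
    (x : nat -> X) (r : R) (a : X) :
  (0 < n)%N -> partial_nmetric P -> cauchy_central P x r -> special_limit P x r a ->
  forall d : R, 0 < d -> exists N : nat, forall i : nat, (N < i)%N ->
    gap P a (x i) <= d /\ gap P (x i) a <= n%:R * d.
Proof.
move=> n_gt0 [_ P_perm _ P_triangle] x_cauchy [a_lim Pa] d d_gt0.
have [N1 N1_lim] := a_lim d d_gt0.
have [N2 N2_cauchy] := x_cauchy d d_gt0.
exists (maxn N1 N2) => i; rewrite gtn_max => /andP[i_N1 i_N2].
have gap_ax : gap P a (x i) <= d by apply/ltW/N1_lim.
split=> //.
have := N2_cauchy (fun _ => i) (fun _ => i_N2); rewrite ltr_distl => /andP[Pxi _].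
have := gap_swap_le P_perm P_triangle a (x i).
have -> : n%:R = n.-1%:R + 1 :> R by rewrite natr1 prednK.
have : n.-1%:R * gap P a (x i) <= n.-1%:R * d by apply: ler_wpM2l.
rewrite Pa /rep in Pxi *; lra.
Qed.

Theorem theorem4p16 (R : realType) (X : Type) (n : nat) (P : ('I_n -> X) -> R)
    (x : nat -> X) (r : R) (a : X) :
  (2 <= n)%N -> partial_nmetric P ->
  cauchy_central P x r -> special_limit P x r a ->
  forall (q : nat) (b : nat -> X) (eps : R), (q <= n.-1)%N -> 0 < eps ->
  exists N : nat, forall I : nat -> nat,
    (forall j, (j < n - q)%N -> (N < I j)%N) ->
    P (cat_args n (n - q) (cst a) b) - eps <
      P (cat_args n (n - q) (fun j => x (I j)) b) /\
    P (cat_args n (n - q) (fun j => x (I j)) b) <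
      P (cat_args n (n - q) (cst a) b) + eps.
Proof.
move=> n_ge2 P_pnm x_cauchy a_special q b eps _ eps_gt0.
have n_gt0 : (0 < n)%N by apply: leq_trans n_ge2.
have [_ P_perm _ P_triangle] := P_pnm.
have nn_gt0 : 0 < (n * n)%:R :> R by rewrite ltr0n muln_gt0 n_gt0.
pose d := eps / (2 * (n * n)%:R).
have d_gt0 : 0 < d by rewrite divr_gt0 // mulr_gt0.
have nnd : (n * n)%:R * d = eps / 2 by rewrite /d; field; rewrite pnatr_eq0 -lt0n.
have [N gap_le] := special_limit_gap_le n_gt0 P_pnm x_cauchy a_special d_gt0.
exists N => I I_gt.
have m_le : (n - q <= n)%N by rewrite leq_subr.
have up := P_cat_args_le (h := fun j => x (I j)) (h' := cst a) P_perm P_triangle b m_le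
  (fun j j_lt => (gap_le _ (I_gt j j_lt)).1).
have lo := P_cat_args_le (h := cst a) (h' := fun j => x (I j)) P_perm P_triangle b m_le
  (fun j j_lt => (gap_le _ (I_gt j j_lt)).2).
have m_d : (n - q)%:R * d <= eps / 2.
  rewrite -nnd; apply: ler_wpM2r; first exact: ltW.
  by rewrite ler_nat (leq_trans m_le) // leq_pmulr.
have m_nd : (n - q)%:R * (n%:R * d) <= eps / 2.
  rewrite -nnd mulrA -natrM; apply: ler_wpM2r; first exact: ltW.
  by rewrite ler_nat leq_mul2r m_le orbT.
split; lra.
Qed.
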